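(* Fix $\theta^* \in \mathbb{R}^n$ and let $\mathcal{T} \subseteq \mathbb{R}^n$ be a nonempty closed convex set such that the re-centered set $\{\theta - \Pi_{\mathcal{T}}(\theta^* ) : \theta \in \mathcal{T}\}$ is a polyhedral cone. Then there exists $r > 0$ such that $$\Pi_{\mathcal{T}}(u) - \Pi_{\mathcal{T}}(\theta^* ) \in (\theta^* - \Pi_{\mathcal{T}}(\theta^* ))^\perp \quad \text{for all } u \in B_r(\theta^* ).$$
   Context: $\Pi_{\mathcal{T}}$ is Euclidean projection onto $\mathcal{T}$; $B_r(x)$ is the closed Euclidean ball of radius $r$ about $x$; $v^\perp = \{w : \langle w, v\rangle = 0\}$. A polyhedral cone is a set $\{x : Ax \le 0\}$ for some matrix $A$. *)

From HB Require Import structures.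
From mathcomp Require Import all_boot all_order all_algebra.
From mathcomp Require Import all_classical all_reals all_analysis.
Set Implicit Arguments. Unset Strict Implicit. Unset Printing Implicit Defensive.
Import Order.TTheory GRing.Theory Num.Theory.
Import numFieldNormedType.Exports.
Local Open Scope ring_scope.
Local Open Scope classical_set_scope.

Section Defs.
Variables (R : realType) (n : nat).

Definition dotv (u v : 'rV[R]_n) : R := \sum_(i < n) u ord0 i * v ord0 i.
Definition enorm (u : 'rV[R]_n) : R := Num.sqrt (dotv u u).

Definition eball (x : 'rV[R]_n) (r : R) : set 'rV[R]_n :=
  [set u | enorm (u - x) <= r].

Definition perp (v : 'rV[R]_n) : set 'rV[R]_n := [set w | dotv w v = 0].

Definition polyhedral_cone (C : set 'rV[R]_n) : Prop :=
  exists (m : nat) (A : 'M[R]_(m, n)),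
    C = [set x | forall i : 'I_m, (A *m x^T) i ord0 <= 0].

Definition is_proj (T : set 'rV[R]_n) (u p : 'rV[R]_n) : Prop :=
  T p /\ forall q, T q -> enorm (u - p) <= enorm (u - q).

(* Euclidean projection Pi_T(u): a chosen nearest point (unique when T is
   nonempty closed convex); default 0 if none exists. *)
Definition eproj (T : set 'rV[R]_n) (u : 'rV[R]_n) : 'rV[R]_n :=
  xget 0 [set p | is_proj T u p].

End Defs.

(* Write p0 for the projection of theta* onto T, so that T = p0 + C with
   C = {x | A x <= 0}, and v = theta* - p0 lies in the polar cone of C.  For
   w = u - p0, the projection x of w onto C satisfies the variational
   inequality; hence w - x lies in the polar of the cone C_I cut out by the
   constraints active at x, and (w - x).x = 0 gives |w - x - v| <= |w - v|.
   The polar of each of the finitely many cones C_I is closed, so once u is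
   close enough to theta*, v itself lies in the polar of C_I; as both x and
   -x belong to C_I, this forces v.x = 0. *)

From HB Require Import structures.
From mathcomp Require Import all_boot all_order all_algebra.
From mathcomp Require Import all_classical all_reals all_analysis.
From mathcomp Require Import ring lra.
Import Order.TTheory GRing.Theory Num.Theory.
Import numFieldNormedType.Exports.
Local Open Scope ring_scope.
Local Open Scope classical_set_scope.
Set Implicit Arguments.
Unset Strict Implicit.
Unset Printing Implicit Defensive.

Lemma at_right_ex (R : realType) (x : R) (P : set R) :
  (\forall e \near x^'+, P e) -> exists2 e, x < e & P e.
Proof.
move=> Px; have [e [xe Pe]] := filter_ex (filterI (nbhs_right_gt x) Px).
by exists e.
Qed.

Section Euclid.
Variables (R : realType) (n : nat).
Implicit Types (u v w z c : 'rV[R]_n) (T K : set 'rV[R]_n).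

Lemma dotvC u v : dotv u v = dotv v u.
Proof. by apply: eq_bigr => i _; rewrite mulrC. Qed.

Lemma dotvDl u v w : dotv (u + v) w = dotv u w + dotv v w.
Proof.
by rewrite /dotv -big_split; apply: eq_bigr => i _; rewrite !mxE mulrDl.
Qed.

Lemma dotvZl (a : R) u w : dotv (a *: u) w = a * dotv u w.
Proof.
by rewrite /dotv mulr_sumr; apply: eq_bigr => i _; rewrite !mxE mulrA.
Qed.

Lemma dotvNl u w : dotv (- u) w = - dotv u w.
Proof. by rewrite -scaleN1r dotvZl mulN1r. Qed.

Lemma dotvBl u v w : dotv (u - v) w = dotv u w - dotv v w.
Proof. by rewrite dotvDl dotvNl. Qed.

Lemma dotvDr u v w : dotv w (u + v) = dotv w u + dotv w v.
Proof. by rewrite dotvC dotvDl !(dotvC w). Qed.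

Lemma dotvZr (a : R) u w : dotv w (a *: u) = a * dotv w u.
Proof. by rewrite dotvC dotvZl dotvC. Qed.

Lemma dotvNr u w : dotv w (- u) = - dotv w u.
Proof. by rewrite dotvC dotvNl dotvC. Qed.

Lemma dotvBr u v w : dotv w (u - v) = dotv w u - dotv w v.
Proof. by rewrite dotvDr dotvNr. Qed.

Lemma dotvv_ge0 u : 0 <= dotv u u.
Proof. by apply: sumr_ge0 => i _; rewrite -expr2 sqr_ge0. Qed.

Lemma ler_enorm u v : (enorm u <= enorm v) = (dotv u u <= dotv v v).
Proof. by rewrite /enorm ler_sqrt // dotvv_ge0. Qed.

Lemma dotv_AMGM z c (t : R) : 0 < t ->
  2 * dotv z c <= t * dotv z z + dotv c c / t.
Proof.
move=> t0; have := dotvv_ge0 (t *: z - c).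
rewrite !dotvBl !dotvBr !dotvZl !dotvZr (dotvC c z).
have : t * (dotv c c / t) = dotv c c by rewrite mulrC mulfVK ?gt_eqF.
nra.
Qed.

Lemma sqr_coord_le_dotv u j : u ord0 j ^+ 2 <= dotv u u.
Proof.
rewrite /dotv (bigD1 j) //= -expr2 lerDl.
by apply: sumr_ge0 => i _; rewrite -expr2 sqr_ge0.
Qed.

Lemma continuous_sqdist u :
  continuous (fun q : 'rV[R]_n => dotv (u - q) (u - q)).
Proof.
apply: continuous_big => [|i _]; first exact: add_continuous.
have uqi : continuous (fun q : 'rV[R]_n => (u - q) ord0 i).
  under eq_fun do rewrite !mxE.
  move=> q; apply: continuousB; first exact: cst_continuous.
  exact: coord_continuous.
by move=> q; apply: continuousM; exact: uqi.
Qed.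

Lemma bounded_sqdist u (M : R) (B : set 'rV[R]_n) :
  (forall q, B q -> dotv (u - q) (u - q) <= M) -> bounded_set B.
Proof.
move=> BM; pose U := \sum_k `|u ord0 k|.
exists (U + 1 + M); split; first by rewrite num_real.
move=> N hN q /BM qM.
rewrite /= [X in X <= _]/Num.Def.normr /= mx_normrE; apply: bigmax_le.
  apply: le_trans (ltW hN); have := le_trans (dotvv_ge0 _) qM.
  have : 0 <= U by rewrite sumr_ge0.
  lra.
move=> [i j] _ /=; rewrite (ord1 i); apply: le_trans (ltW hN).
have uU : `|u ord0 j| <= U by rewrite /U (bigD1 j) //= lerDl sumr_ge0.
have := le_trans (sqr_coord_le_dotv (u - q) j) qM; rewrite !mxE.
set a := u ord0 j - q ord0 j => aM.
have -> : q ord0 j = u ord0 j - a by rewrite /a opprB addrC subrK.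
have a1 : `|a| <= 1 + a ^+ 2.
  have := sqr_ge0 (`|a| - 1).
  by rewrite -[a ^+ 2]real_normK ?num_real //; nra.
by apply: le_trans (ler_normB _ _) _; lra.
Qed.

Lemma is_proj_exists T u : T !=set0 -> closed T -> exists p, is_proj T u p.
Proof.
case=> t0 Tt0 Tcl; pose f q := dotv (u - q) (u - q).
have fc : continuous f by exact: continuous_sqdist.
pose A := T `&` f @^-1` [set x | x <= f t0].
have Acl : closed A.
  by apply: closedI => //; apply: preimage_closed => //; exact: closed_le.
have Abd : bounded_set A by apply: (@bounded_sqdist u (f t0)) => q [].
have [|c /set_mem [Tc ct0] cmin] :=
    EVT_min_rV _ (bounded_closed_compact Abd Acl) (continuous_subspaceT fc).
  by exists t0; split => /=.
exists c; split => // q Tq; rewrite ler_enorm -/(f c) -/(f q).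
have [qt0|/ltW t0q] := leP (f q) (f t0); first by apply: cmin; rewrite inE.
exact: le_trans ct0 t0q.
Qed.

Lemma convex_segment T p t (s : R) : convex_set T -> T p -> T t ->
  0 <= s -> s <= 1 -> T (p + s *: (t - p)).
Proof.
move=> cT Tp Tt s0 s1.
have := cT t p (Itv01 s0 s1); rewrite !inE => /(_ Tt Tp); congr T.
by rewrite /conv /= /unstable.onem scalerBl scale1r scalerBr addrCA addrC.
Qed.

Lemma le0_of_le_small_multiples (x y : R) :
  (forall s, 0 < s -> s <= 1 -> x <= s * y) -> x <= 0.
Proof.
move=> xy; rewrite leNgt; apply/negP => x0.
have y0 : 0 < y by apply: lt_le_trans x0 _; rewrite -[y]mul1r; exact: xy.
have s0 : 0 < x / (2 * y) by rewrite divr_gt0 ?mulr_gt0.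
have s1 : x / (2 * y) <= 1.
  by rewrite ler_pdivrMr ?mulr_gt0 // mul1r; have := xy 1; lra.
have := xy _ s0 s1; rewrite mulrAC -mulf_div divff ?gt_eqF // mulr1; lra.
Qed.

Lemma is_proj_vi T u p t : convex_set T -> is_proj T u p -> T t ->
  dotv (u - p) (t - p) <= 0.
Proof.
move=> cT [Tp pmin] Tt.
apply: (@le0_of_le_small_multiples _ (dotv (t - p) (t - p) / 2)) => s s0 s1.
have := pmin _ (convex_segment cT Tp Tt (ltW s0) s1).
have -> : u - (p + s *: (t - p)) = u - p - s *: (t - p) by rewrite opprD addrA.
rewrite ler_enorm; move: (u - p) (t - p) => z d.
by rewrite !dotvBl !dotvBr !dotvZl !dotvZr (dotvC d z); nra.
Qed.

Definition polar K := [set y | forall c, K c -> dotv y c <= 0].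

Lemma polar_sqdist_closed K v : \forall d \near 0^'+,
  forall y, dotv (y - v) (y - v) <= d -> polar K y -> polar K v.
Proof.
have [Kv|/existsNP[c /not_implyP[Kc /negP]]] := pselect (polar K v).
  by apply: nearW.
rewrite -ltNge => g0; set g := dotv v c in g0.
set t := (dotv c c + 1) / g.
have t0 : 0 < t by rewrite divr_gt0 // ltr_wpDl // dotvv_ge0.
near=> d => y yv /(_ c Kc) yc; exfalso; move: yc; apply/negP; rewrite -ltNge.
have dt : d * t < g.
  rewrite -ltr_pdivlMr //; near: d; apply: nbhs_right_lt; exact: divr_gt0.
have ct : dotv c c / t < g.
  rewrite ltr_pdivrMr // /t mulrCA divff ?gt_eqF // mulr1; lra.
have := dotv_AMGM (- (y - v)) c t0; rewrite dotvNl dotvNl dotvNr opprK.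
have -> : dotv y c = g + dotv (y - v) c by rewrite dotvBl addrC subrK.
have := ler_wpM2r (ltW t0) yv; nra.
Unshelve. all: by end_near.
Qed.

End Euclid.

Section PolyhedralCone.
Variables (R : realType) (n m : nat) (A : 'M[R]_(m, n)).
Implicit Types (v w x y c : 'rV[R]_n) (I : {set 'I_m}).

Definition constr i x := (A *m x^T) i ord0.

Lemma constrD i x y : constr i (x + y) = constr i x + constr i y.
Proof. by rewrite /constr linearD mulmxDr mxE. Qed.

Lemma constrZ i (s : R) x : constr i (s *: x) = s * constr i x.
Proof. by rewrite /constr linearZ /= -scalemxAr mxE. Qed.

Lemma constrN i x : constr i (- x) = - constr i x.
Proof. by rewrite -scaleN1r constrZ mulN1r. Qed.

Definition cone := [set x | forall i, constr i x <= 0].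

Definition cone_on I := [set c | forall i, i \in I -> constr i c <= 0].

Definition active x := [set i | constr i x == 0]%SET.

Lemma cone_on_active_lineal x :
  cone_on (active x) x /\ cone_on (active x) (- x).
Proof. by split=> i; rewrite inE ?constrN => /eqP ->; rewrite ?oppr0. Qed.

Lemma cone_on_active_feasible x c : cone x -> cone_on (active x) c ->
  \forall e \near 0^'+, cone (x + e *: c).
Proof.
move=> Cx Fc; apply: filter_forall => i.
have [ci|ci] := leP (constr i c) 0.
  near=> e; have e0 : 0 < e by near: e; exact: nbhs_right_gt.
  by rewrite constrD constrZ; have := Cx i; nra.
have xi : constr i x < 0.
  rewrite lt_neqAle Cx andbT; apply: contraTneq ci => xi0.
  by rewrite -leNgt; apply: Fc; rewrite inE xi0.
near=> e; have : e < - constr i x / constr i c.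
  by near: e; apply: nbhs_right_lt; rewrite divr_gt0 ?oppr_gt0.
by rewrite ltr_pdivlMr // constrD constrZ; lra.
Unshelve. all: by end_near.
Qed.

Section VariationalInequality.
Variables w x : 'rV[R]_n.
Hypotheses (Cx : cone x) (vi : forall c, cone c -> dotv (w - x) (c - x) <= 0).

Lemma cone_vi_orth : dotv (w - x) x = 0.
Proof.
apply/le_anti/andP; split.
  have := vi (c := x + x); rewrite addrK; apply=> i.
  by rewrite constrD; have := Cx i; lra.
have := vi (c := 0); rewrite sub0r dotvNr oppr_le0; apply=> i.
by rewrite -(scale0r x) constrZ mul0r.
Qed.

Lemma cone_vi_polar : polar (cone_on (active x)) (w - x).
Proof.
move=> c Fc; have [e e0 Ce] := at_right_ex (cone_on_active_feasible Cx Fc).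
by have := vi Ce; rewrite addrAC subrr add0r dotvZr pmulr_rle0.
Qed.

End VariationalInequality.

Lemma cone_proj_orth_near v : polar cone v -> \forall r \near 0^'+,
  forall w x, dotv (w - v) (w - v) <= r -> cone x ->
    (forall c, cone c -> dotv (w - x) (c - x) <= 0) -> dotv x v = 0.
Proof.
move=> Pv.
have faces : \forall r \near 0^'+, forall I y, dotv (y - v) (y - v) <= r ->
    polar (cone_on I) y -> polar (cone_on I) v.
  by apply: filter_forall => I; exact: polar_sqdist_closed.
apply: filterS faces => r Hr w x wv Cx vi.
have orth := cone_vi_orth Cx vi; have vx := Pv x Cx.
have yv : dotv (w - x - v) (w - x - v) <= r.
  have zx : dotv (w - v) x = dotv x x - dotv v x.
    by move/eqP: orth; rewrite !dotvBl subr_eq0 => /eqP ->.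
  have -> : w - x - v = (w - v) - x by rewrite addrAC.
  move: (w - v) zx wv => z zx zv.
  by rewrite dotvBl !dotvBr (dotvC x z) zx; have := dotvv_ge0 x; lra.
have [Fx FNx] := cone_on_active_lineal x.
have Pav := Hr (active x) _ yv (cone_vi_polar Cx vi).
by apply/le_anti; rewrite dotvC Pav //= -oppr_le0 -dotvNr Pav.
Qed.

End PolyhedralCone.

Theorem lemma4 (R : realType) (n : nat) (thetas : 'rV[R]_n)
  (T : set 'rV[R]_n) :
  T !=set0 -> closed T -> convex_set T ->
  polyhedral_cone [set theta - eproj T thetas | theta in T] ->
  exists2 r : R, 0 < r &
    forall u, eball thetas r u ->
      perp (thetas - eproj T thetas) (eproj T u - eproj T thetas).
Proof.
move=> T0 Tcl Tcvx [m [A TA]]; set p0 := eproj T thetas in TA *.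
have TC t : T t <-> cone A (t - p0).
  have -> : cone A = [set theta - p0 | theta in T] by rewrite TA.
  split=> [|[t' Tt' /(congr1 (+%R^~ p0))]]; first by exists t.
  by rewrite /= !subrK => <-.
have projP u : is_proj T u (eproj T u).
  by apply: xgetPex; exact: is_proj_exists.
have vi (u c : 'rV[R]_n) : cone A c ->
    dotv ((u - p0) - (eproj T u - p0)) (c - (eproj T u - p0)) <= 0.
  move=> Cc; rewrite opprB !addrA subrK.
  by apply: is_proj_vi Tcvx (projP u) _; apply/TC; rewrite addrK.
have Pv : polar (cone A) (thetas - p0).
  by move=> c /(vi thetas); rewrite subrr !subr0.
have [r r0 Hr] := at_right_ex (cone_proj_orth_near Pv).
exists (Num.sqrt r); first by rewrite sqrtr_gt0.
move=> u ur; apply: (Hr (u - p0)); last exact: vi.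
- rewrite opprB addrA subrK.
  by move: ur; rewrite /eball /= /enorm ler_sqrt // ltW.
- by apply/TC; case: (projP u).
Qed.
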